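(* Let $n \ge 1$ and let $T_n$ be the $n\times n$ matrix with entries $t_{ij} = |i-j|$ for $i,j = 1,\ldots,n$. Then $T_n$ is solvable if and only if $n \equiv 0$ or $1 \pmod 4$. Equivalently: there exists a permutation $f:\{1,\ldots,n\}\to\{1,\ldots,n\}$ such that $|f(i)-i|$ takes each of the values $0,1,\ldots,n-1$ exactly once (as $i$ ranges over $\{1,\ldots,n\}$) if and only if $n \equiv 0$ or $1 \pmod 4$.
   Context: $T_n$ is called solvable if one can select $n$ entries of $T_n$, no two in the same row or the same column, whose values are exactly $0,1,\ldots,n-1$ (each value once). *)

From mathcomp Require Import all_boot all_order all_algebra all_fingroup.
Set Implicit Arguments. Unset Strict Implicit. Unset Printing Implicit Defensive.

(* T_n : the n x n matrix with entries |i - j| (0-indexed rows/columns;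
   the difference is shift-invariant so this equals the 1-indexed version). *)
Definition Tmat (n : nat) : 'M[nat]_n :=
  \matrix_(i < n, j < n) `|(i : nat) - (j : nat)|%N.

(* A square nat matrix A is solvable if one can select n entries, no two in the
   same row or column (i.e. the entries A i (s i) for a permutation s), whose
   values are exactly 0, 1, ..., n-1, each value once. *)
Definition solvable_mx (n : nat) (A : 'M[nat]_n) : Prop :=
  exists s : 'S_n, perm_eq [seq A i (s i) | i : 'I_n] (iota 0 n).

(* Necessity is a parity argument: for any permutation s, |i - s i| has the
   parity of i + s i, so the total displacement has the parity of
   2 (0 + ... + (n-1)) and is even; if the displacements are 0, ..., n-1 this
   total is C(n, 2), which is even exactly when n = 0 or 1 (mod 4).
   Sufficiency is by explicit permutations of {0, ..., n-1} for n = 4k and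
   n = 4k + 1 whose displacements are pairwise distinct. *)

From mathcomp Require Import all_boot all_order all_algebra all_fingroup zify.

Lemma sum_displacement_even n (s : 'S_n) :
  ~~ odd (\sum_(i < n) `|i - s i|).
Proof.
have sum_s : \sum_(i < n) (s i : nat) = \sum_(i < n) (i : nat).
  by rewrite [RHS](reindex_inj (@perm_inj _ s)).
have split_dist : \sum_(i < n) (`|i - s i| + minn i (s i) * 2)
                  = \sum_(i < n) ((i : nat) + s i).
  by apply: eq_bigr => i _; lia.
rewrite !big_split -big_distrl /= sum_s addnn in split_dist.
move: (odd_double (\sum_(i < n) (i : nat))).
by rewrite -split_dist oddD oddM andbF addbF => ->.
Qed.

Lemma odd_bin2 n : odd 'C(n, 2) = (1 < n %% 4).
Proof.
have bin2_double : 'C(n, 2) * 2 = n * n.-1.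
  by rewrite -[2]/(2`!) bin_ffact !ffactnS ffactn0 muln1.
have -> : odd 'C(n, 2) = ('C(n, 2) %% 2 == 1) by rewrite modn2; case: odd.
move: bin2_double; have := divn_eq n 4.
have := ltn_pmod n (isT : 0 < 4).
move: ('C(n, 2)) (n %/ 4) (n %% 4) => c q [|[|[|[|r]]]] // _ ->; lia.
Qed.

Lemma Tmat_solvable_bin2_even n : solvable_mx (Tmat n) -> ~~ odd 'C(n, 2).
Proof.
case=> s; rewrite -bin2_sum /index_iota subn0 -sumnE => /perm_sumn <-.
rewrite sumnE big_map big_enum /=.
have -> : \sum_(i < n) Tmat n i (s i) = \sum_(i < n) `|i - s i|.
  by apply: eq_bigr => i _; rewrite mxE.
exact: sum_displacement_even.
Qed.

Definition distinct_displacements n (g : nat -> nat) :=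
  [/\ forall x, x < n -> g x < n,
      forall x y, x < n -> y < n -> g x = g y -> x = y &
      forall x y, x < n -> y < n -> `|x - g x| = `|y - g y| -> x = y].

Lemma Tmat_solvable_of_displacements n g :
  distinct_displacements n g -> solvable_mx (Tmat n).
Proof.
case=> g_lt g_inj disp_inj.
pose h (i : 'I_n) : 'I_n := Ordinal (g_lt _ (ltn_ord i)).
have h_inj : injective h.
  by move=> i j /(congr1 val) /(g_inj _ _ (ltn_ord i) (ltn_ord j)) /val_inj.
exists (perm h_inj).
have -> : [seq Tmat n i (perm h_inj i) | i : 'I_n] = [seq `|i - g i| | i : 'I_n].
  by apply: eq_map => i; rewrite mxE permE.
have disps_uniq : uniq [seq `|i - g i| | i : 'I_n].
  by rewrite map_inj_uniq ?enum_uniq // => i j /disp_inj eq_ij; apply/val_inj/eq_ij.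
have disps_sub : {subset [seq `|i - g i| | i : 'I_n] <= iota 0 n}.
  move=> _ /mapP [i _ ->]; rewrite mem_iota /=.
  by have := ltn_ord i; have := g_lt _ (ltn_ord i); lia.
have disps_size : size (iota 0 n) <= size [seq `|i - g i| | i : 'I_n].
  by rewrite size_map size_enum_ord size_iota.
have [_ disps_eq] := uniq_min_size disps_uniq disps_sub disps_size.
exact: uniq_perm disps_uniq (iota_uniq 0 n) disps_eq.
Qed.

(* Displacements, block by block: the odd numbers 4k-1, ..., 2k+1, then 0, the
   even numbers 2k-2, ..., 2, then 2k, the odd numbers 1, ..., 2k-1 and the
   even numbers 2k+2, ..., 4k-2. *)
Definition perm4k (k x : nat) : nat :=
  if x < k then 4 * k - 1 - x else if x == k then k
  else if x < 2 * k then 4 * k - x else if x == 2 * k then 0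
  else if x <= 3 * k then 4 * k + 1 - x else 4 * k - x.

(* Displacements, block by block: the even numbers 4k, ..., 2k+2, the odd
   numbers 2k-1, ..., 1, then 2k, the even numbers 2, ..., 2k-2, then 0 and
   the odd numbers 2k+1, ..., 4k-1. *)
Definition perm4k1 (k x : nat) : nat :=
  if x < k then 4 * k - x else if x < 2 * k then 4 * k - 1 - x
  else if x == 2 * k then 0 else if x < 3 * k then 4 * k - x
  else if x == 3 * k then 3 * k else 4 * k + 1 - x.

Lemma distinct_displacements_perm4k k :
  0 < k -> distinct_displacements (4 * k) (perm4k k).
Proof.
by move=> k_gt0; split=> [x | x y | x y]; rewrite /perm4k; repeat case: ifP => ?; lia.
Qed.

Lemma distinct_displacements_perm4k1 k :
  distinct_displacements (4 * k + 1) (perm4k1 k).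
Proof. by split=> [x | x y | x y]; rewrite /perm4k1; repeat case: ifP => ?; lia. Qed.

Theorem theorem1 (n : nat) (hn : 1 <= n) :
  solvable_mx (Tmat n) <-> (n %% 4 = 0 \/ n %% 4 = 1).
Proof.
split=> [/Tmat_solvable_bin2_even | n_mod4].
  by rewrite odd_bin2; lia.
have n_eq := divn_eq n 4; move: (n %/ 4) n_eq => k n_eq.
case: n_mod4 => r_eq; rewrite r_eq in n_eq.
- have -> : n = 4 * k by lia.
  by apply/Tmat_solvable_of_displacements/distinct_displacements_perm4k; lia.
- have -> : n = 4 * k + 1 by lia.
  exact/Tmat_solvable_of_displacements/distinct_displacements_perm4k1.
Qed.
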